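(* Assume that every increasing sequence of positive integers $x_1<x_2<x_3<\cdots$ with bounded gaps (i.e. there is a constant $K$ with $x_{n+1}-x_n\le K$ for all $n\ge1$) contains a double 3-term arithmetic progression. Then for every positive integer $r$ and every coloring of $\mathbb{N}$ with $r$ colors, there is a color class $A=\{a_1<a_2<a_3<\cdots\}$ (finite or infinite, listed in increasing order) that contains a double 3-term arithmetic progression, i.e. there are indices $i<j<k$ with $i+k=2j$ and $a_i+a_k=2a_j$. *)

From mathcomp Require Import all_boot.
Set Implicit Arguments. Unset Strict Implicit. Unset Printing Implicit Defensive.

(* An increasing sequence of positive integers x_0 < x_1 < ... (indexed from 0). *)
Definition pos_increasing (x : nat -> nat) : Prop :=
  0 < x 0 /\ forall n, x n < x n.+1.

Definition bounded_gaps (x : nat -> nat) : Prop :=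
  exists K, forall n, x n.+1 - x n <= K.

Definition seq_has_double_3AP (x : nat -> nat) : Prop :=
  exists i j k, [/\ i < j < k, i + k = 2 * j & x i + x k = 2 * x j].

(* Position (0-based) of a in the increasing enumeration of the set A:
   the number of elements of A smaller than a.  For a \in A,
   a is the (rank A a)-th element of A, i.e. a = a_{rank A a}. *)
Definition rank (A : pred nat) (a : nat) : nat := count A (iota 0 a).

(* Indices are expressed
   via elements a<b<c of A and their positions rank A _ . *)
Definition set_has_double_3AP (A : pred nat) : Prop :=
  exists a b c, [/\ A a, A b, A c & a < b < c] /\
    rank A a + rank A c = 2 * rank A b /\ a + c = 2 * b.

Definition color_class (r : nat) (c : nat -> 'I_r) (col : 'I_r) : pred nat :=
  fun n => (0 < n) && (c n == col).

From mathcomp Require Import all_boot zify.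
From Stdlib Require Import Classical ClassicalEpsilon.
Set Implicit Arguments. Unset Strict Implicit.

(* Double 3-APs of a set are a finite configuration: a < b < c with
   a + c = 2b whose ranks in the set also form an AP.  Since ranks of a
   translated set only shift by a constant, such a configuration found in
   a colouring c' reappears in any colouring c that contains a long enough
   window of c' (double_3AP_window).
   The theorem follows by induction on the number of colours r + 1.
   - If the last colour class is syndetic (meets every interval of length
     K + 1), its enumeration b_0 < b_1 < ... has bounded gaps and b_i has
     rank i, so the hypothesis gives the double 3-AP (syndetic_double_3AP).
   - Otherwise the other r colours fill arbitrarily long windows of c; by a
     Koenig's-lemma compactness argument (compactness) there is a colouring
     c' with r colours each of whose prefixes is a window of c.  The
     induction hypothesis applies to c' and the configuration transfers
     back to c. *)

Lemma rankS (A : pred nat) m : rank A m.+1 = rank A m + A m.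
Proof. by rewrite /rank -addn1 iotaD count_cat /= addn0. Qed.

Lemma rank_gap (A : pred nat) a b :
  a <= b -> (forall t, a <= t < b -> ~~ A t) -> rank A b = rank A a.
Proof.
move=> /subnKC <-; elim: (b - a) => [|d IH] free; first by rewrite addn0.
rewrite addnS rankS IH => [|t /andP [le_at lt_tb]]; last by apply: free; lia.
by rewrite (negbTE (free _ _)) ?addn0 //; lia.
Qed.

Lemma rank_shift (A A' : pred nat) n a :
  (forall t, t < a -> A (n + t) = A' t) -> rank A (n + a) = rank A n + rank A' a.
Proof.
move=> agree; rewrite /rank iotaD count_cat add0n -{2}[n]addn0 iotaDl.
congr (_ + _); rewrite count_map; apply: eq_in_count => t.
by rewrite mem_iota => /andP [_ ta]; apply: agree.
Qed.

(* A double 3-AP is a finite configuration, invisible to the absolute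
   position of a window: it survives translating the set and changing it
   beyond the largest term. *)
Lemma double_3AP_window (A' : pred nat) : set_has_double_3AP A' ->
  exists N, forall (A : pred nat) n,
    (forall t, t < N -> A (n + t) = A' t) -> set_has_double_3AP A.
Proof.
move=> [a [b [e [[Aa Ab Ae /andP [ab be]] [ranks sum]]]]].
exists e.+1 => A n agree.
have rk t : t <= e -> rank A (n + t) = rank A n + rank A' t.
  by move=> te; apply: rank_shift => s st; apply: agree; lia.
exists (n + a), (n + b), (n + e); split; first split.
- by rewrite agree //; lia.
- by rewrite agree //; lia.
- by rewrite agree.
- by rewrite !ltn_add2l ab be.
by rewrite !rk; lia.
Qed.

Definition syndetic_with (B : pred nat) (K : nat) : Prop :=
  forall n, exists m, n <= m <= n + K /\ B m.

Section SyndeticEnumeration.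
Variables (B : pred nat) (K : nat).
Hypothesis syndB : syndetic_with B K.

Lemma exists_from m : exists t, (m <= t) && B t.
Proof. by have [t [/andP [mt _] Bt]] := syndB m; exists t; rewrite mt Bt. Qed.

Definition next_elt m : nat := ex_minn (exists_from m).

Lemma next_eltP m : [/\ B (next_elt m), m <= next_elt m <= m + K &
  forall t, m <= t < next_elt m -> ~~ B t].
Proof.
rewrite /next_elt; case: ex_minnP => t /andP [mt Bt] least; split => //.
  have [u [/andP [mu uK] Bu]] := syndB m.
  by rewrite mt (leq_trans (least u _) uK) // mu Bu.
move=> u /andP [mu ut]; apply/negP => Bu.
by have := least u; rewrite mu Bu leqNgt ut => /(_ isT).
Qed.

Definition enum_elt (n : nat) : nat := iter n (fun p => next_elt p.+1) (next_elt 0).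

Lemma enum_eltS n : enum_elt n.+1 = next_elt (enum_elt n).+1.
Proof. by []. Qed.

Lemma enum_elt_in n : B (enum_elt n).
Proof.
case: n => [|n]; first by case: (next_eltP 0).
by rewrite enum_eltS; case: (next_eltP (enum_elt n).+1).
Qed.

Lemma enum_elt_step n : enum_elt n < enum_elt n.+1 <= enum_elt n + K.+1.
Proof. by rewrite enum_eltS addnS; case: (next_eltP (enum_elt n).+1). Qed.

Lemma rank_enum_elt n : rank B (enum_elt n) = n.
Proof.
elim: n => [|n IH].
  case: (next_eltP 0) => _ /andP [le0 _] free.
  by rewrite (rank_gap le0 free).
rewrite enum_eltS; case: (next_eltP (enum_elt n).+1) => _ /andP [le _] free.
by rewrite (rank_gap le free) rankS IH enum_elt_in addn1.
Qed.

End SyndeticEnumeration.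

Lemma common_bound r (P : nat -> nat -> Prop) :
  (forall v N N', N <= N' -> P v N -> P v N') ->
  (forall v, v < r -> exists N, P v N) -> exists N, forall v, v < r -> P v N.
Proof.
move=> up; elim: r => [|r IH] ex; first by exists 0.
have [N1 H1] := IH (fun v vr => ex v (ltnW vr)).
have [N2 H2] := ex r (ltnSn r).
exists (maxn N1 N2) => v; rewrite ltnS leq_eqVlt => /orP [/eqP->|vr].
  exact: up (leq_maxr _ _) H2.
exact: up (leq_maxl _ _) (H1 v vr).
Qed.

Definition upd (f : nat -> nat) (L v : nat) : nat -> nat :=
  fun m => if m == L then v else f m.

(* Koenig's lemma for colourings: if a colouring c has arbitrarily long
   windows using only the colours below r, then some colouring with
   colours below r has all its prefixes occurring as windows of c.  The
   limit is built prefix by prefix, always keeping a prefix which starts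
   arbitrarily long such windows. *)
Section Compactness.
Variables (r : nat) (c : nat -> nat).
Hypothesis long_windows : forall K, exists n, forall m, m < K -> c (n + m) < r.

Definition occurs_at (f : nat -> nat) (L N n : nat) : Prop :=
  (forall m, m < N -> c (n + m) < r) /\ (forall m, m < L -> c (n + m) = f m).

Definition extendable (f : nat -> nat) (L : nat) : Prop :=
  forall N, exists n, occurs_at f L N n.

(* Pigeonhole step: one of the r possible next colours keeps the prefix
   extendable. *)
Lemma extendable_step f L :
  extendable f L -> exists v, v < r /\ extendable (upd f L v) L.+1.
Proof.
move=> ext; apply: NNPP => none.
have bad v : v < r -> exists N, forall n, ~ occurs_at (upd f L v) L.+1 N n.
  move=> vr; have /not_all_ex_not [N noN] : ~ extendable (upd f L v) L.+1.
    by move=> ext'; apply: none; exists v.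
  by exists N; apply: not_ex_all_not.
have [N0 badN0] : exists N, forall v, v < r ->
    forall n, ~ occurs_at (upd f L v) L.+1 N n.
  apply: common_bound bad => v N N' NN' badN n [below pref].
  by apply: (badN n); split=> // m mN; apply: below; apply: leq_trans NN'.
have [n [below pref]] := ext (maxn N0 L.+1).
have cL : c (n + L) < r by apply: below; rewrite leq_max leqnn orbT.
apply: (badN0 _ cL n); split=> [m mN0 | m].
  by apply: below; rewrite leq_max mN0.
rewrite /upd ltnS leq_eqVlt => /orP [/eqP->|mL]; first by rewrite eqxx.
by rewrite (ltn_eqF mL) pref.
Qed.

Definition next_color (f : nat -> nat) (L : nat) : nat :=
  epsilon (inhabits 0) (fun v => v < r /\ extendable (upd f L v) L.+1).

Fixpoint branch (L : nat) : nat -> nat :=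
  if L is L'.+1 then upd (branch L') L' (next_color (branch L') L')
  else fun=> 0.

Lemma branch_extendable L : extendable (branch L) L.
Proof.
elim: L => [|L IH] /=; last first.
  by case: (epsilon_spec (inhabits 0) _ (extendable_step IH)).
by move=> N; have [n below] := long_windows N; exists n; split.
Qed.

Lemma branch_stable m L : m < L -> branch L m = branch m.+1 m.
Proof.
move=> /subnKC <-; elim: (L - m.+1) => [|d IH]; first by rewrite addn0.
by rewrite addnS /= /upd ltn_eqF ?IH // ltnS leq_addr.
Qed.

Lemma compactness : exists c' : nat -> nat, (forall m, c' m < r) /\
  forall N, exists n, forall m, m < N -> c (n + m) = c' m.
Proof.
exists (fun m => branch m.+1 m); split=> [m | N] /=.
  rewrite /upd eqxx.
  by case: (epsilon_spec (inhabits 0) _ (extendable_step (branch_extendable m))).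
have [n [_ pref]] := branch_extendable N N.
by exists n => m mN; rewrite pref // branch_stable.
Qed.

End Compactness.

Lemma long_gaps (B : pred nat) : ~ (exists K, syndetic_with B K) ->
  forall K, exists n, forall m, m < K -> ~~ B (n + m).
Proof.
move=> not_synd K; apply: NNPP => no_gap; apply: not_synd; exists K => n.
apply: NNPP => missed; apply: no_gap; exists n => m mK; apply/negP => Bm.
by apply: missed; exists (n + m); split=> //; lia.
Qed.

Section Colourings.
Hypothesis bounded_gaps_double_3AP : forall x : nat -> nat,
  pos_increasing x -> bounded_gaps x -> seq_has_double_3AP x.

(* A syndetic set is, through its enumeration, a sequence with bounded gaps;
   its double 3-AP is one of the set, since b_i has rank i. *)
Lemma syndetic_double_3AP (B : pred nat) K :
  syndetic_with B K -> set_has_double_3AP B.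
Proof.
move=> syndB; set b := enum_elt syndB.
have b_mono : {homo b : i j / i < j}.
  apply: (@homo_ltn _ b (fun x y => x < y)); first exact: ltn_trans.
  by move=> i; case/andP: (enum_elt_step syndB i).
have [i [j [k [/andP [ij jk] ikj sum]]]] : seq_has_double_3AP (fun n => (b n).+1).
  apply: bounded_gaps_double_3AP; first by split=> // n; rewrite ltnS b_mono.
  exists K.+1 => n; rewrite subSS leq_subLR.
  by case/andP: (enum_elt_step syndB n).
exists (b i), (b j), (b k); rewrite !rank_enum_elt !enum_elt_in !b_mono //.
by split => //; split => //; lia.
Qed.

Lemma colouring_double_3AP r (c : nat -> nat) : (forall n, c n < r) ->
  exists2 col, col < r & set_has_double_3AP (fun t => c t == col).
Proof.
elim: r c => [|r IH] c below; first by have := below 0.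
have [[K synd] | not_synd] := classic (exists K, syndetic_with (fun t => c t == r) K).
  by exists r => //; apply: syndetic_double_3AP synd.
have windows_below_r : forall K, exists n, forall m, m < K -> c (n + m) < r.
  move=> K; have [n gap] := long_gaps not_synd K.
  by exists n => m mK; have := below (n + m); have := gap m mK; lia.
have [c' [below' windows]] := compactness windows_below_r.
have [col col_r dap] := IH c' below'.
have [N transfer] := double_3AP_window dap.
have [n agree] := windows N.
exists col; first exact: ltnW.
by apply: (transfer _ n) => t tN; rewrite /= agree.
Qed.

End Colourings.

Theorem proposition1 :
  (forall x : nat -> nat, pos_increasing x -> bounded_gaps x -> seq_has_double_3AP x) ->
  forall (r : nat), 0 < r -> forall c : nat -> 'I_r,
    exists col : 'I_r, set_has_double_3AP (color_class c col).
Proof.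
move=> bounded_gaps_double_3AP r _ c.
have [col col_r dap] := colouring_double_3AP bounded_gaps_double_3AP
  (c := fun n => c n.+1) (fun n => ltn_ord (c n.+1)).
exists (Ordinal col_r).
have [N transfer] := double_3AP_window dap.
by apply: (transfer _ 1).
Qed.
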